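(* Let $\boldsymbol{M}$ be a weight sequence such that $\widetilde{\boldsymbol{M}}$ is almost increasing, and let $\boldsymbol{A}$ be either an almost increasing sequence, or a sequence such that $\liminf_{p\to\infty}A_p^{1/p}>0$ and $\widehat{\boldsymbol{A}}$ satisfies $\operatorname{(alg)}$. Then: (i) $\mathcal{F}\colon\mathcal{S}^{\{\widehat{\boldsymbol{A}}\}}_{\{\boldsymbol{M}\}}(\mathbb{R})\to\mathcal{S}^{\{\widetilde{\boldsymbol{M}}\}}_{\{\widehat{\boldsymbol{A}}\}}(\mathbb{R})$ is (well-defined and) continuous, and the same holds at the level of Banach spaces with a uniform scaling of $h$: there exists $a>0$ such that for every $h\ge1$, $\mathcal{F}$ maps $\mathcal{S}^{\widehat{\boldsymbol{A}},h}_{\boldsymbol{M},h}(\mathbb{R})$ continuously into $\mathcal{S}^{\widetilde{\boldsymbol{M}},ah}_{\widehat{\boldsymbol{A}},ah}(\mathbb{R})$. (ii) Statement (i) is also valid for $\mathcal{F}^{-1}$.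
   Context: Sequences are of positive reals indexed by $\mathbb{N}_0$; $m_p=M_{p+1}/M_p$. Weight sequence: $M_0=1$, $M_p^2\le M_{p-1}M_{p+1}$ ($p\ge1$), $m_p\to\infty$. $\widetilde{\boldsymbol{M}}=(\widetilde M_p)_p$ with $\widetilde M_p=M_{p+1}\log(e^2m_{p+1}/m_p)$. Almost increasing: $c_p\le ac_q$ for all $q\ge p$, some $a>0$. $\operatorname{(alg)}$ for $\boldsymbol{N}$: $N_pN_q\le C_1^{p+q}N_{p+q}$ for all $p,q$, some $C_1\ge1$. $\widehat{\boldsymbol{A}}=(p!A_p)_p$. For sequences $\boldsymbol{N},\boldsymbol{B}$ and $h>0$, $\mathcal{S}^{\boldsymbol{B},h}_{\boldsymbol{N},h}(\mathbb{R})$ is the Banach space of $\varphi\in C^\infty(\mathbb{R})$ with norm $\sup_{p,q}\sup_{x\in\mathbb{R}}|x^p\varphi^{(q)}(x)|/(h^{p+q}N_pB_q)$, and $\mathcal{S}^{\{\boldsymbol{B}\}}_{\{\boldsymbol{N}\}}(\mathbb{R})=\bigcup_h$ of these with inductive limit topology. $\mathcal{F}(\varphi)(\xi)=\int_{\mathbb{R}}\varphi(x)e^{ix\xi}\,dx$, $\mathcal{F}^{-1}(\varphi)(\xi)=\frac1{2\pi}\mathcal{F}(\varphi)(-\xi)$. *)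

From Stdlib Require Import Reals Factorial.
From Coquelicot Require Export Coquelicot.
Open Scope R_scope.

Definition quot (M : nat -> R) (p : nat) : R := M (S p) / M p.

Definition weight_sequence (M : nat -> R) : Prop :=
  (forall p, 0 < M p) /\
  M 0%nat = 1 /\
  (forall p, (1 <= p)%nat -> M p ^ 2 <= M (p - 1)%nat * M (S p)) /\
  is_lim_seq (quot M) p_infty.

Definition Mtilde (M : nat -> R) (p : nat) : R :=
  M (S p) * ln (exp 2 * quot M (S p) / quot M p).

Definition Ahat (A : nat -> R) (p : nat) : R := INR (fact p) * A p.

Definition almost_increasing (c : nat -> R) : Prop :=
  exists a, 0 < a /\ forall p q, (p <= q)%nat -> c p <= a * c q.

Definition alg (N : nat -> R) : Prop :=
  exists C1, 1 <= C1 /\ forall p q, N p * N q <= C1 ^ (p + q) * N (p + q)%nat.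

Definition liminf_root_pos (A : nat -> R) : Prop :=
  Rbar_lt (Finite 0) (LimInf_seq (fun p => Rpower (A p) (/ INR p))).

Definition cderiv (phi : R -> C) (q : nat) (x : R) : C :=
  (Derive_n (fun t => fst (phi t)) q x, Derive_n (fun t => snd (phi t)) q x).

Definition smooth (phi : R -> C) : Prop :=
  forall q x, ex_derive_n (fun t => fst (phi t)) q x /\
              ex_derive_n (fun t => snd (phi t)) q x.

Definition bounded_by (N B : nat -> R) (h : R) (phi : R -> C) (K : R) : Prop :=
  forall p q x, Cmod (Cmult (RtoC (x ^ p)) (cderiv phi q x)) <= K * (h ^ (p + q) * N p * B q).

Definition in_S (N B : nat -> R) (h : R) (phi : R -> C) : Prop :=
  smooth phi /\ exists K, bounded_by N B h phi K.

(** phi belongs to S^{B}_{N}(R) (Roumieu type: union over h > 0) *)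
Definition in_S_union (N B : nat -> R) (phi : R -> C) : Prop :=
  exists h, 0 < h /\ in_S N B h phi.

Definition expi (t : R) : C := (cos t, sin t).

Definition fourier_int (phi : R -> C) (xi : R) (l : C) : Prop :=
  is_RInt_gen (fun x => Cmult (phi x) (expi (x * xi))) (Rbar_locally m_infty) (Rbar_locally p_infty) l.

Definition is_fourier (phi psi : R -> C) : Prop :=
  forall xi, fourier_int phi xi (psi xi).

Definition is_inv_fourier (phi psi : R -> C) : Prop :=
  forall xi, exists l, fourier_int phi (- xi) l /\ psi xi = Cmult (RtoC (/ (2 * PI))) l.

(** The transform T (given as a relation phi |-> psi) is well-defined from
    S^{B1}_{N1} into S^{B2}_{N2} and continuous for the inductive limit
    topologies: each step S^{B1,h}_{N1,h} is mapped by a bounded linear map into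
    some step S^{B2,k}_{N2,k}. *)
Definition maps_continuously_LB (T : (R -> C) -> (R -> C) -> Prop)
  (N1 B1 N2 B2 : nat -> R) : Prop :=
  (forall phi, in_S_union N1 B1 phi ->
     exists psi, T phi psi /\ in_S_union N2 B2 psi) /\
  (forall h, 0 < h -> exists k K, 0 < k /\ 0 <= K /\
     forall phi, in_S N1 B1 h phi ->
       exists psi, T phi psi /\ in_S N2 B2 k psi /\
         forall C0, bounded_by N1 B1 h phi C0 -> bounded_by N2 B2 k psi (K * C0)).

Definition maps_continuously_banach (T : (R -> C) -> (R -> C) -> Prop)
  (N1 B1 N2 B2 : nat -> R) : Prop :=
  exists a, 0 < a /\ forall h, 1 <= h -> exists K, 0 <= K /\
     forall phi, in_S N1 B1 h phi ->
       exists psi, T phi psi /\ in_S N2 B2 (a * h) psi /\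
         forall C0, bounded_by N1 B1 h phi C0 -> bounded_by N2 B2 (a * h) psi (K * C0).

From Stdlib Require Import Reals Factorial Lra Lia Psatz.
From Coquelicot Require Import Coquelicot.
Open Scope R_scope.

(* If [phi] lies in the step [h] of the source space with constant [C0], the functions
   [x^j phi^(m)] are bounded by [N j m = 2 C0 h^(j+m) M_j Ahat_m], which is log-convex in [j].
   Splitting the real line at [N_(k+1)/N_k] and [N_(k+2)/N_(k+1)] and using the three bounds
   [N_k], [N_(k+1)/|x|], [N_(k+2)/x^2] on the respective pieces bounds
   [G_(k,m)(xi) = int x^k phi^(m)(x) e^(i x xi) dx] by
   [N_(k+1) (6 + 4 log (N_k N_(k+2) / N_(k+1)^2))], which is at most
   [8 C0 h^(k+m+1) Ahat_m Mtilde_k]: the logarithm is exactly the one defining [Mtilde].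
   Differentiating in [xi] raises [k] by one, and integration by parts gives
   [xi G_(k,m) = i (k G_(k-1,m) + G_(k,m+1))]; iterating it, [xi^p F(phi)^(q)] is a sum of
   at most [2^p] terms [q (q-1) ... (q-j+1) G_(q-j,p-j)]. The hypothesis on [A] yields
   [j! Ahat_(p-j) <= c D^p Ahat_p] and the almost increase of [Mtilde] yields
   [Mtilde_(q-j) <= a Mtilde_q], so the Fourier transform lands in the step
   [2 max(D,1) h] of the target space. [F^-1] only differs by the reflection [xi -> -xi]
   and the factor [1/(2 pi)]. *)

Lemma Rabs_sub_le_of_derive_le1 (f df : R -> R) :
  (forall x, is_derive f x (df x)) -> (forall x, Rabs (df x) <= 1) ->
  forall x y, Rabs (f x - f y) <= Rabs (x - y).
Proof.
  intros Hf Hdf x y.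
  destruct (MVT_abs f df y x) as [c [-> _]].
  { intros c _. apply is_derive_Reals, Hf. }
  pose proof (Hdf c). pose proof (Rabs_pos (x - y)). pose proof (Rabs_pos (df c)). nra.
Qed.

Lemma taylor1_remainder_le (f df : R -> R) (a b : R) :
  (forall x, is_derive f x (df x)) -> (forall x y, Rabs (df x - df y) <= Rabs (x - y)) ->
  Rabs (f (a + b) - f a - b * df a) <= b ^ 2.
Proof.
  intros Hf Hdf.
  destruct (MVT_abs (fun t => f (a + t) - t * df a) (fun t => df (a + t) - df a) 0 b)
    as [c [E Hc]].
  { intros c _. apply is_derive_Reals. auto_derive.
    - eexists; apply Hf.
    - rewrite (is_derive_unique f _ _ (Hf _)). ring. }
  rewrite Rplus_0_r, !Rmult_0_l, Rminus_0_r, Rminus_0_r in E.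
  replace (f (a + b) - f a - b * df a) with (f (a + b) - b * df a - f a) by ring.
  rewrite E. pose proof (Hdf (a + c) a) as Hl. replace (a + c - a) with c in Hl by ring.
  assert (Rabs c <= Rabs b) by (unfold Rmin, Rmax in Hc; destruct (Rle_dec 0 b); split_Rabs; lra).
  rewrite <- (pow2_abs b). pose proof (Rabs_pos c). pose proof (Rabs_pos (df (a + c) - df a)). nra.
Qed.

Lemma sin_add_taylor1 (a b : R) : Rabs (sin (a + b) - sin a - b * cos a) <= b ^ 2.
Proof.
  apply (taylor1_remainder_le sin cos).
  - intros x. apply is_derive_Reals, derivable_pt_lim_sin.
  - apply (Rabs_sub_le_of_derive_le1 cos (fun t => - sin t)).
    + intros x. apply is_derive_Reals, derivable_pt_lim_cos.
    + intros x. rewrite Rabs_Ropp. apply Rabs_le, SIN_bound.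
Qed.

Lemma cos_add_taylor1 (a b : R) : Rabs (cos (a + b) - cos a + b * sin a) <= b ^ 2.
Proof.
  replace (cos (a + b) - cos a + b * sin a) with (cos (a + b) - cos a - b * - sin a) by ring.
  apply (taylor1_remainder_le cos (fun t => - sin t)).
  - intros x. apply is_derive_Reals, derivable_pt_lim_cos.
  - intros x y. replace (- sin x - - sin y) with (- (sin x - sin y)) by ring. rewrite Rabs_Ropp.
    apply (Rabs_sub_le_of_derive_le1 sin cos).
    + intros t. apply is_derive_Reals, derivable_pt_lim_sin.
    + intros t. apply Rabs_le, COS_bound.
Qed.

Lemma Rabs_lin_comb_le (a b u v : R) : Rabs a <= 1 -> Rabs b <= 1 ->
  Rabs (a * u + b * v) <= Rabs u + Rabs v.
Proof.
  intros Ha Hb. eapply Rle_trans; [apply Rabs_triang|]. rewrite !Rabs_mult.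
  pose proof (Rabs_pos u). pose proof (Rabs_pos v). nra.
Qed.

Lemma Cmult_RtoC_pair (r u v : R) : Cmult (RtoC r) (u, v) = (r * u, r * v).
Proof. unfold Cmult, RtoC. simpl. f_equal; ring. Qed.

Lemma Rabs_add_le_2Cmod (u v : R) : Rabs u + Rabs v <= 2 * Cmod (u, v).
Proof.
  pose proof (Rmax_Cmod (u, v)) as H. simpl in H.
  pose proof (Rmax_l (Rabs u) (Rabs v)). pose proof (Rmax_r (Rabs u) (Rabs v)). lra.
Qed.

Lemma Cmod_le_Rabs_add (u v : R) : Cmod (u, v) <= Rabs u + Rabs v.
Proof.
  unfold Cmod. cbn [fst snd]. pose proof (Rabs_pos u). pose proof (Rabs_pos v).
  rewrite <- (sqrt_pow2 (Rabs u + Rabs v)) by lra. apply sqrt_le_1_alt.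
  rewrite <- (pow2_abs u), <- (pow2_abs v). nra.
Qed.

Lemma is_derive_of_sq_remainder (u : R -> R) (x v B : R) :
  (forall h, Rabs (u (x + h) - u x - h * v) <= B * h ^ 2) -> is_derive u x v.
Proof.
  intros H. apply is_derive_Reals. intros eps Heps.
  assert (HB : 0 <= B) by (specialize (H 1); pose proof (Rabs_pos (u (x + 1) - u x - 1 * v)); lra).
  assert (Hd : 0 < eps / (B + 1)) by (apply Rdiv_lt_0_compat; lra).
  exists (mkposreal _ Hd). intros h Hh0 Hh. simpl in Hh.
  replace ((u (x + h) - u x) / h - v) with ((u (x + h) - u x - h * v) / h) by (field; auto).
  assert (Hh1 : 0 < Rabs h) by (apply Rabs_pos_lt, Hh0).
  rewrite Rabs_div by exact Hh0. apply Rlt_div_l; [exact Hh1|].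
  eapply Rle_lt_trans; [apply H|]. rewrite <- (pow2_abs h).
  assert ((B + 1) * Rabs h < eps) by (apply Rlt_div_r in Hh; [lra | lra]).
  nra.
Qed.

(** * Improper integrals over the real line *)

Local Notation minfty := (Rbar_locally m_infty).
Local Notation pinfty := (Rbar_locally p_infty).

Lemma is_RInt_inv_sq (c u v : R) : 0 < u -> u <= v ->
  is_RInt (fun x => c / x ^ 2) u v (c / u - c / v).
Proof.
  intros Hu Huv.
  replace (c / u - c / v) with (minus ((fun x => - c / x) v) ((fun x => - c / x) u))
    by (unfold minus, plus, opp; simpl; field; lra).
  apply (is_RInt_derive (V := R_CompleteNormedModule)); intros x Hx;
    rewrite Rmin_left, Rmax_right in Hx by lra.
  - auto_derive; [lra | field; lra].
  - apply (ex_derive_continuous (K := R_AbsRing) (V := R_NormedModule)). auto_derive. nra.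
Qed.

Lemma is_RInt_inv_shift (c r u : R) : 0 < r -> 0 <= u ->
  is_RInt (fun x => c / (x + r)) 0 u (c * (ln (u + r) - ln r)).
Proof.
  intros Hr Hu.
  replace (c * (ln (u + r) - ln r))
    with (minus ((fun x => c * ln (x + r)) u) ((fun x => c * ln (x + r)) 0))
    by (unfold minus, plus, opp; simpl; rewrite (Rplus_0_l r); ring).
  apply (is_RInt_derive (V := R_CompleteNormedModule) (fun x => c * ln (x + r)));
    intros x Hx; rewrite Rmin_left, Rmax_right in Hx by lra.
  - auto_derive; [lra | field; lra].
  - apply (ex_derive_continuous (K := R_AbsRing) (V := R_NormedModule)). auto_derive. lra.
Qed.

Lemma Rabs_RInt_le_dominated (f g : R -> R) (u v lg : R) : u <= v -> ex_RInt f u v ->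
  (forall x, u <= x <= v -> Rabs (f x) <= g x) -> is_RInt g u v lg ->
  Rabs (RInt f u v) <= lg.
Proof.
  intros Huv Hf Hfg Hg.
  apply (norm_RInt_le f g u v (RInt f u v) lg Huv); auto.
  apply (RInt_correct (V := R_CompleteNormedModule)), Hf.
Qed.

Lemma Rabs_RInt_swap (f : R -> R) (u v : R) : ex_RInt f u v ->
  Rabs (RInt f v u) = Rabs (RInt f u v).
Proof.
  intros Hf. rewrite <- (opp_RInt_swap (V := R_CompleteNormedModule) f u v Hf).
  apply Rabs_Ropp.
Qed.

Lemma Rabs_RInt_reflect (f : R -> R) (u v : R) : ex_RInt f u v ->
  Rabs (RInt f u v) = Rabs (RInt (fun y => f (- y)) (- u) (- v)).
Proof.
  intros Hf.
  assert (H0 : is_RInt (fun y => - f (- y)) (- u) (- v) (RInt f u v)).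
  { apply (is_RInt_comp_opp (V := R_NormedModule) f). rewrite !Ropp_involutive.
    apply (RInt_correct (V := R_CompleteNormedModule)), Hf. }
  assert (H : is_RInt (fun y => f (- y)) (- u) (- v) (- RInt f u v)).
  { apply (is_RInt_ext (V := R_NormedModule) (fun y => - - f (- y)));
      [intros x _; unfold opp; simpl; ring|].
    exact (is_RInt_opp (V := R_NormedModule) _ _ _ _ H0). }
  rewrite (is_RInt_unique _ _ _ _ H). symmetry. apply Rabs_Ropp.
Qed.

Lemma ex_RInt_reflect (f : R -> R) : (forall a b, ex_RInt f a b) ->
  forall a b, ex_RInt (fun y => f (- y)) a b.
Proof.
  intros Hf a b. apply (ex_RInt_ext (fun y => - - f (- y))); [intros; lra|].
  apply (ex_RInt_opp (V := R_NormedModule)), (ex_RInt_comp_opp (V := R_NormedModule) f), Hf.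
Qed.

Lemma Rabs_RInt_right_tail_le (f : R -> R) (c T u v : R) : (forall a b, ex_RInt f a b) ->
  (forall x, x ^ 2 * Rabs (f x) <= c) -> 0 < T -> T <= u -> T <= v ->
  Rabs (RInt f u v) <= c / T.
Proof.
  intros Hf Hfc HT.
  assert (Hc : 0 <= c) by (specialize (Hfc 0); pose proof (Rabs_pos (f 0)); simpl in Hfc; lra).
  assert (Hle : forall a b, T <= a <= b -> Rabs (RInt f a b) <= c / T).
  { intros a b Hab. eapply Rle_trans.
    - apply (Rabs_RInt_le_dominated f (fun x => c / x ^ 2));
        [lra | apply Hf | | apply is_RInt_inv_sq; lra].
      intros x Hx. apply Rle_div_r; [apply pow2_gt_0; lra|]. rewrite Rmult_comm. apply Hfc.
    - assert (c / a <= c / T) by (apply Rmult_le_compat_l; [lra | apply Rinv_le_contravar; lra]).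
      assert (0 <= c / b) by (apply Rdiv_le_0_compat; lra). lra. }
  intros Hu Hv. destruct (Rle_dec u v).
  - apply Hle; lra.
  - rewrite <- Rabs_RInt_swap by apply Hf. apply Hle; lra.
Qed.

Lemma Rabs_RInt_tail_le (f : R -> R) (c T u v : R) : (forall a b, ex_RInt f a b) ->
  (forall x, x ^ 2 * Rabs (f x) <= c) -> 0 < T ->
  (T <= u /\ T <= v) \/ (u <= - T /\ v <= - T) -> Rabs (RInt f u v) <= c / T.
Proof.
  intros Hf Hfc HT [[Hu Hv] | [Hu Hv]].
  - apply Rabs_RInt_right_tail_le; auto.
  - rewrite Rabs_RInt_reflect by apply Hf.
    apply Rabs_RInt_right_tail_le; auto using ex_RInt_reflect; try lra.
    intros x. replace (x ^ 2) with ((- x) ^ 2) by ring. apply Hfc.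
Qed.

Lemma exists_ratio_lt (c eps : R) : 0 <= c -> 0 < eps -> exists T, 0 < T /\ c / T < eps.
Proof.
  intros Hc He. exists ((c + 1) / eps). split; [apply Rdiv_lt_0_compat; lra|].
  apply Rlt_div_l; [apply Rdiv_lt_0_compat; lra|].
  unfold Rdiv. rewrite Rmult_comm, Rmult_assoc, Rinv_l, Rmult_1_r; lra.
Qed.

Lemma filter_prod_minfty_pinfty (P : R * R -> Prop) (T : R) :
  (forall a b, a < - T -> T < b -> P (a, b)) -> filter_prod minfty pinfty P.
Proof.
  intros H. apply (Filter_prod _ _ _ (fun a => a < - T) (fun b => T < b)).
  - exists (- T). auto.
  - exists T. auto.
  - intros; apply H; auto.
Qed.

Lemma is_RInt_gen_of_filterlim (f : R -> R) (l : R) : (forall a b, ex_RInt f a b) ->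
  filterlim (fun ab => RInt f (fst ab) (snd ab)) (filter_prod minfty pinfty) (locally l) ->
  is_RInt_gen f minfty pinfty l.
Proof.
  intros Hf H P HP. specialize (H P HP). unfold filtermap in H. unfold filtermapi.
  eapply filter_imp; [|exact H]. intros [a b] Hab.
  exists (RInt f a b). split; [apply (RInt_correct (V := R_CompleteNormedModule)), Hf | exact Hab].
Qed.

Lemma ex_RInt_gen_of_sq_decay (f : R -> R) (c : R) : (forall a b, ex_RInt f a b) ->
  (forall x, x ^ 2 * Rabs (f x) <= c) -> exists l, is_RInt_gen f minfty pinfty l.
Proof.
  intros Hf Hfc.
  assert (Hc : 0 <= c) by (specialize (Hfc 0); pose proof (Rabs_pos (f 0)); simpl in Hfc; lra).
  cut (exists l, filterlim (fun ab => RInt f (fst ab) (snd ab))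
                   (filter_prod minfty pinfty) (locally l)).
  { intros [l Hl]. exists l. apply is_RInt_gen_of_filterlim; auto. }
  apply (filterlim_locally_closely (U := R_CompleteSpace)). intros P [eps HP].
  destruct (exists_ratio_lt c (eps / 2) Hc) as [T [HT HcT]]; [pose proof (cond_pos eps); lra|].
  set (Q := fun ab : R * R => fst ab < - T /\ T < snd ab).
  assert (HQ : filter_prod minfty pinfty Q)
    by (apply filter_prod_minfty_pinfty with T; split; auto).
  apply (Filter_prod _ _ _ Q Q HQ HQ). intros [a b] [a' b'] [Ha Hb] [Ha' Hb']. simpl in *.
  apply HP. change (Rabs (RInt f a' b' - RInt f a b) < eps).
  rewrite <- (RInt_Chasles (V := R_CompleteNormedModule) f a' a b'), 
          <- (RInt_Chasles (V := R_CompleteNormedModule) f a b b') by apply Hf.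
  unfold plus; simpl.
  replace (RInt f a' a + (RInt f a b + RInt f b b') - RInt f a b)
    with (RInt f a' a + RInt f b b') by ring.
  pose proof (Rabs_RInt_tail_le f c T a' a Hf Hfc HT ltac:(right; lra)).
  pose proof (Rabs_RInt_tail_le f c T b b' Hf Hfc HT ltac:(left; lra)).
  pose proof (Rabs_triang (RInt f a' a) (RInt f b b')). lra.
Qed.

Lemma Rabs_RInt_gen_le (f : R -> R) (l B T : R) : is_RInt_gen f minfty pinfty l ->
  (forall a b y, a < - T -> T < b -> is_RInt f a b y -> Rabs y <= B) -> Rabs l <= B.
Proof.
  intros Hl HB. apply Rnot_lt_le. intros Hlt.
  assert (He : 0 < Rabs l - B) by lra.
  specialize (Hl (ball l (mkposreal _ He)) (locally_ball l (mkposreal _ He))).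
  unfold filtermapi in Hl.
  pose proof (filter_and _ _ Hl
    (filter_prod_minfty_pinfty (fun ab => fst ab < - T /\ T < snd ab) T ltac:(simpl; auto))) as H.
  destruct (filter_ex _ H) as [[a b] [[y [Hy Hyl]] [Ha Hb]]].
  simpl in *. specialize (HB a b y Ha Hb Hy).
  change (Rabs (y - l) < Rabs l - B) in Hyl.
  pose proof (Rabs_triang_inv l y). rewrite Rabs_minus_sym in Hyl. lra.
Qed.

Lemma ln_add_sub_ln_le (r s : R) : 0 < r -> r <= s -> ln (s + r) - ln r <= 1 + ln (s / r).
Proof.
  intros Hr Hrs. rewrite ln_div by lra.
  assert (ln (s + r) <= ln (2 * s)) by (apply ln_le; lra).
  assert (ln 2 < 1).
  { rewrite <- (ln_exp 1). apply ln_increasing; [lra|]. pose proof (exp_ineq1 1 ltac:(lra)). lra. }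
  rewrite ln_mult in * by lra. lra.
Qed.

Section LogBound.

Variables (f : R -> R) (c0 c1 c2 : R).
Hypotheses (Hc0 : 0 < c0) (Hc1 : 0 < c1) (Hc012 : c1 ^ 2 <= c0 * c2).
Hypotheses (Hf0 : forall x, Rabs (f x) <= c0) (Hf1 : forall x, Rabs x * Rabs (f x) <= c1)
  (Hf2 : forall x, x ^ 2 * Rabs (f x) <= c2) (Hf : forall a b, ex_RInt f a b).

(* On [[0, c2/c1]], [|f x| <= min c0 (c1/x) <= 2 c1/(x + c1/c0)]; beyond, [|f x| <= c2/x^2]. *)
Lemma Rabs_RInt_pos_half_le (b : R) : c2 / c1 <= b ->
  Rabs (RInt f 0 b) <= c1 * (3 + 2 * ln (c0 * c2 / c1 ^ 2)).
Proof.
  intros Hb. set (r := c1 / c0). set (s := c2 / c1).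
  assert (Hr : 0 < r) by (apply Rdiv_lt_0_compat; lra).
  assert (Hrs : r <= s).
  { unfold r, s. apply (Rmult_le_reg_r (c0 * c1)); [nra|].
    replace (c1 / c0 * (c0 * c1)) with (c1 ^ 2) by (field; lra).
    replace (c2 / c1 * (c0 * c1)) with (c0 * c2) by (field; lra). lra. }
  assert (Hsr : s / r = c0 * c2 / c1 ^ 2) by (unfold r, s; field; lra).
  assert (Hc2 : 0 < c2) by nra.
  assert (Hcs : c2 / s = c1) by (unfold s; field; lra).
  rewrite <- (RInt_Chasles (V := R_CompleteNormedModule) f 0 s b) by apply Hf.
  assert (Hcore : Rabs (RInt f 0 s) <= 2 * c1 * (ln (s + r) - ln r)).
  { apply (Rabs_RInt_le_dominated f (fun x => 2 * c1 / (x + r))); [lra | apply Hf | |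
      apply is_RInt_inv_shift; lra].
    intros x Hx. apply Rle_div_r; [lra|].
    specialize (Hf0 x). specialize (Hf1 x). rewrite Rabs_pos_eq in Hf1 by lra.
    assert (Hc0r : c0 * r = c1) by (unfold r; field; lra).
    pose proof (Rabs_pos (f x)). destruct (Rle_dec x r); nra. }
  assert (Htail : Rabs (RInt f s b) <= c1).
  { rewrite <- Hcs. apply Rabs_RInt_right_tail_le; auto; lra. }
  pose proof (ln_add_sub_ln_le r s Hr Hrs). rewrite Hsr in H.
  assert (2 * c1 * (ln (s + r) - ln r) <= 2 * c1 * (1 + ln (c0 * c2 / c1 ^ 2)))
    by (apply Rmult_le_compat_l; lra).
  pose proof (Rabs_triang (RInt f 0 s) (RInt f s b)). change plus with Rplus. lra.
Qed.

End LogBound.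

Lemma Rabs_RInt_gen_le_log (f : R -> R) (c0 c1 c2 l : R) :
  0 < c0 -> 0 < c1 -> c1 ^ 2 <= c0 * c2 ->
  (forall x, Rabs (f x) <= c0) -> (forall x, Rabs x * Rabs (f x) <= c1) ->
  (forall x, x ^ 2 * Rabs (f x) <= c2) -> (forall a b, ex_RInt f a b) ->
  is_RInt_gen f minfty pinfty l -> Rabs l <= c1 * (6 + 4 * ln (c0 * c2 / c1 ^ 2)).
Proof.
  intros Hc0 Hc1 Hc012 Hf0 Hf1 Hf2 Hf Hl.
  apply (Rabs_RInt_gen_le f l _ (c2 / c1) Hl). intros a b y Ha Hb Hy.
  rewrite <- (is_RInt_unique f a b y Hy).
  rewrite <- (RInt_Chasles (V := R_CompleteNormedModule) f a 0 b) by apply Hf.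
  change plus with Rplus.
  assert (Hneg : Rabs (RInt f a 0) <= c1 * (3 + 2 * ln (c0 * c2 / c1 ^ 2))).
  { rewrite Rabs_RInt_reflect, Ropp_0, Rabs_RInt_swap by auto using ex_RInt_reflect.
    apply Rabs_RInt_pos_half_le; auto using ex_RInt_reflect; try lra.
    - intros x. rewrite <- Rabs_Ropp. apply Hf1.
    - intros x. replace (x ^ 2) with ((- x) ^ 2) by ring. apply Hf2. }
  pose proof (Rabs_RInt_pos_half_le f c0 c1 c2 Hc0 Hc1 Hc012 Hf0 Hf1 Hf2 Hf b ltac:(lra)).
  pose proof (Rabs_triang (RInt f a 0) (RInt f 0 b)). lra.
Qed.

Lemma filterlim_zero_of_decay (P : R -> R) (c : R) (F : (R -> Prop) -> Prop) :
  Filter F -> (forall T, F (fun x => T < Rabs x)) ->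
  (forall x, Rabs x * Rabs (P x) <= c) -> filterlim P F (locally 0).
Proof.
  intros HF HFT HP. apply filterlim_locally. intros eps.
  assert (Hc : 0 <= c)
    by (specialize (HP 0); rewrite Rabs_R0 in HP; pose proof (Rabs_pos (P 0)); lra).
  destruct (exists_ratio_lt c eps Hc (cond_pos eps)) as [T [HT HcT]].
  apply (filter_imp (fun x => T < Rabs x)); [|apply HFT]. intros x Hx.
  change (Rabs (P x - 0) < eps). rewrite Rminus_0_r.
  apply Rlt_div_l in HcT; [|lra]. specialize (HP x). pose proof (Rabs_pos (P x)).
  pose proof (cond_pos eps). nra.
Qed.

Lemma is_RInt_gen_derive_of_decay (P dP : R -> R) (c : R) :
  (forall x, is_derive P x (dP x)) -> (forall x, continuous dP x) ->
  (forall x, Rabs x * Rabs (P x) <= c) -> is_RInt_gen dP minfty pinfty 0.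
Proof.
  intros HdP Hc HP.
  assert (HD : forall x, Derive P x = dP x) by (intros; apply is_derive_unique, HdP).
  apply (is_RInt_gen_ext (Derive P)); [apply filter_forall; intros; apply HD|].
  replace 0 with (0 - 0) by ring.
  apply is_RInt_gen_Derive; try (apply filter_forall; intros ab x _).
  - eexists; apply HdP.
  - apply (continuous_ext dP); [intros; symmetry; apply HD | apply Hc].
  - apply (filterlim_zero_of_decay P c); [exact _ | | exact HP].
    intros T. exists (- Rabs T). intros x Hx. split_Rabs; lra.
  - apply (filterlim_zero_of_decay P c); [exact _ | | exact HP].
    intros T. exists (Rabs T). intros x Hx. split_Rabs; lra.
Qed.

Lemma is_RInt_gen_eq (f g : R -> R) (l : R) : (forall x, f x = g x) ->
  is_RInt_gen f minfty pinfty l -> is_RInt_gen g minfty pinfty l.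
Proof. intros H. apply (is_RInt_gen_ext (V := R_NormedModule)), filter_forall. intros; apply H. Qed.

Lemma is_RInt_gen_lin (f g : R -> R) (a b lf lg : R) :
  is_RInt_gen f minfty pinfty lf -> is_RInt_gen g minfty pinfty lg ->
  is_RInt_gen (fun x => a * f x + b * g x) minfty pinfty (a * lf + b * lg).
Proof.
  intros Hf Hg.
  exact (is_RInt_gen_plus (V := R_NormedModule) _ _ _ _
    (is_RInt_gen_scal (V := R_NormedModule) f a lf Hf)
    (is_RInt_gen_scal (V := R_NormedModule) g b lg Hg)).
Qed.

Lemma is_RInt_gen_unique_R (f : R -> R) (l1 l2 : R) :
  is_RInt_gen f minfty pinfty l1 -> is_RInt_gen f minfty pinfty l2 -> l1 = l2.
Proof.
  intros H1 H2. rewrite <- (is_RInt_gen_unique (V := R_CompleteNormedModule) f l1 H1).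
  exact (is_RInt_gen_unique (V := R_CompleteNormedModule) f l2 H2).
Qed.

Lemma is_RInt_gen_pair (f1 f2 : R -> R) (l1 l2 : R) :
  is_RInt_gen f1 minfty pinfty l1 -> is_RInt_gen f2 minfty pinfty l2 ->
  is_RInt_gen (V := prod_NormedModule R_AbsRing R_NormedModule R_NormedModule)
    (fun x => (f1 x, f2 x)) minfty pinfty (l1, l2).
Proof.
  intros H1 H2 P [eps HP].
  specialize (H1 (ball l1 eps) (locally_ball l1 eps)).
  specialize (H2 (ball l2 eps) (locally_ball l2 eps)).
  unfold filtermapi in *. generalize (filter_and _ _ H1 H2). apply filter_imp.
  intros [a b] [[y1 [Hy1 Hb1]] [y2 [Hy2 Hb2]]]. exists (y1, y2). split.
  - apply (is_RInt_fct_extend_pair (U := R_NormedModule) (V := R_NormedModule)); simpl; auto.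
  - apply HP. split; auto.
Qed.

(** * Fourier integrals of the weighted derivatives *)

Definition dre (phi : R -> C) (m : nat) : R -> R := Derive_n (fun t => fst (phi t)) m.
Definition dim (phi : R -> C) (m : nat) : R -> R := Derive_n (fun t => snd (phi t)) m.

(* [rotate phi = -i phi], so the imaginary part of a Fourier integral of [phi] is the real
   part of the same integral of [rotate phi]: [ftm phi k m xi] is the real part of
   [int x^k phi^(m)(x) e^(i x xi) dx] and [ftm (rotate phi) k m xi] its imaginary part. *)
Definition rotate (phi : R -> C) : R -> C := fun t => (snd (phi t), - fst (phi t)).

Definition ftm_integrand (phi : R -> C) (k m : nat) (xi x : R) : R :=
  x ^ k * (dre phi m x * cos (x * xi) - dim phi m x * sin (x * xi)).

Definition ftm (phi : R -> C) (k m : nat) (xi : R) : R :=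
  RInt_gen (ftm_integrand phi k m xi) minfty pinfty.

Definition wderiv_abs (phi : R -> C) (j m : nat) (x : R) : R :=
  Rabs (x ^ j * dre phi m x) + Rabs (x ^ j * dim phi m x).

Definition moment_bound (phi : R -> C) (N : nat -> nat -> R) : Prop :=
  smooth phi /\ (forall j m, 0 < N j m) /\
  (forall j m, N (S j) m ^ 2 <= N j m * N (S (S j)) m) /\
  (forall j m x, wderiv_abs phi j m x <= N j m).

Lemma dim_rotate (phi : R -> C) (m : nat) (x : R) : dim (rotate phi) m x = - dre phi m x.
Proof. apply Derive_n_opp. Qed.

Lemma ex_derive_dre (phi : R -> C) (m : nat) (x : R) : smooth phi -> ex_derive (dre phi m) x.
Proof. intros Hs. exact (proj1 (Hs (S m) x)). Qed.

Lemma ex_derive_dim (phi : R -> C) (m : nat) (x : R) : smooth phi -> ex_derive (dim phi m) x.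
Proof. intros Hs. exact (proj2 (Hs (S m) x)). Qed.

Lemma smooth_rotate (phi : R -> C) : smooth phi -> smooth (rotate phi).
Proof. intros Hs q x. split; [apply Hs | apply ex_derive_n_opp, Hs]. Qed.

Lemma wderiv_abs_rotate (phi : R -> C) (j m : nat) (x : R) :
  wderiv_abs (rotate phi) j m x = wderiv_abs phi j m x.
Proof.
  unfold wderiv_abs. rewrite dim_rotate. change (dre (rotate phi) m x) with (dim phi m x).
  rewrite Ropp_mult_distr_r_reverse, Rabs_Ropp. ring.
Qed.

Lemma moment_bound_rotate (phi : R -> C) (N : nat -> nat -> R) :
  moment_bound phi N -> moment_bound (rotate phi) N.
Proof.
  intros [Hs [HN [HNlc Hw]]]. split; [apply smooth_rotate, Hs|]. split; [exact HN|].
  split; [exact HNlc|]. intros j m x. rewrite wderiv_abs_rotate. apply Hw.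
Qed.

Lemma wderiv_abs_S (phi : R -> C) (j m : nat) (x : R) :
  Rabs x * wderiv_abs phi j m x = wderiv_abs phi (S j) m x.
Proof.
  unfold wderiv_abs. rewrite Rmult_plus_distr_l, <- !Rabs_mult. simpl. f_equal; f_equal; ring.
Qed.

Lemma wderiv_abs_SS (phi : R -> C) (j m : nat) (x : R) :
  x ^ 2 * wderiv_abs phi j m x = wderiv_abs phi (S (S j)) m x.
Proof. rewrite <- !wderiv_abs_S, <- Rmult_assoc, <- Rabs_mult, Rabs_pos_eq; [ring | nra]. Qed.

Lemma Rabs_ftm_integrand_le (phi : R -> C) (k m : nat) (xi x : R) :
  Rabs (ftm_integrand phi k m xi x) <= wderiv_abs phi k m x.
Proof.
  unfold ftm_integrand, wderiv_abs.
  replace (x ^ k * (dre phi m x * cos (x * xi) - dim phi m x * sin (x * xi)))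
    with (cos (x * xi) * (x ^ k * dre phi m x) + - sin (x * xi) * (x ^ k * dim phi m x)) by ring.
  apply Rabs_lin_comb_le; [| rewrite Rabs_Ropp]; apply Rabs_le; auto using COS_bound, SIN_bound.
Qed.

Lemma continuous_ftm_integrand (phi : R -> C) (k m : nat) (xi x : R) : smooth phi ->
  continuous (ftm_integrand phi k m xi) x.
Proof.
  intros Hs. apply (ex_derive_continuous (K := R_AbsRing) (V := R_NormedModule)).
  unfold ftm_integrand. auto_derive.
  split; [apply ex_derive_dre, Hs|]. split; [apply ex_derive_dim, Hs | exact I].
Qed.

Lemma ex_RInt_ftm_integrand (phi : R -> C) (k m : nat) (xi a b : R) : smooth phi ->
  ex_RInt (ftm_integrand phi k m xi) a b.
Proof.
  intros Hs. apply (ex_RInt_continuous (V := R_CompleteNormedModule)). intros x _.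
  apply continuous_ftm_integrand, Hs.
Qed.

Definition log_bound (N : nat -> nat -> R) (j m : nat) : R :=
  N (S j) m * (6 + 4 * ln (N j m * N (S (S j)) m / N (S j) m ^ 2)).

Lemma Rabs_RInt_gen_le_log_bound (phi : R -> C) (N : nat -> nat -> R) (F : R -> R)
  (K : R) (j m : nat) (l : R) : moment_bound phi N -> 0 < K ->
  (forall x, Rabs (F x) <= K * wderiv_abs phi j m x) -> (forall a b, ex_RInt F a b) ->
  is_RInt_gen F minfty pinfty l -> Rabs l <= K * log_bound N j m.
Proof.
  intros [_ [HN [HNlc Hw]]] HK HF Hex Hl. unfold log_bound.
  pose proof (HN j m). pose proof (HN (S j) m). pose proof (HN (S (S j)) m).
  replace (N j m * N (S (S j)) m / N (S j) m ^ 2)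
    with (K * N j m * (K * N (S (S j)) m) / (K * N (S j) m) ^ 2) by (field; lra).
  rewrite <- Rmult_assoc.
  apply (Rabs_RInt_gen_le_log F); auto; try nra.
  - specialize (HNlc j m). nra.
  - intros x. eapply Rle_trans; [apply HF|]. apply Rmult_le_compat_l; [lra | apply Hw].
  - intros x. eapply Rle_trans; [apply Rmult_le_compat_l; [apply Rabs_pos | apply HF]|].
    rewrite Rmult_comm, Rmult_assoc, (Rmult_comm _ (Rabs x)), wderiv_abs_S.
    apply Rmult_le_compat_l; [lra | apply Hw].
  - intros x. eapply Rle_trans; [apply Rmult_le_compat_l; [apply pow2_ge_0 | apply HF]|].
    rewrite Rmult_comm, Rmult_assoc, (Rmult_comm _ (x ^ 2)), wderiv_abs_SS.
    apply Rmult_le_compat_l; [lra | apply Hw].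
Qed.

Lemma is_RInt_gen_ftm (phi : R -> C) (N : nat -> nat -> R) (k m : nat) (xi : R) :
  moment_bound phi N -> is_RInt_gen (ftm_integrand phi k m xi) minfty pinfty (ftm phi k m xi).
Proof.
  intros [Hs [_ [_ Hw]]].
  destruct (ex_RInt_gen_of_sq_decay (ftm_integrand phi k m xi) (N (S (S k)) m)) as [l Hl].
  - intros a b. apply ex_RInt_ftm_integrand, Hs.
  - intros x. rewrite <- (Rmult_1_l (N _ _)), <- (Rmult_1_l (_ * Rabs _)).
    eapply Rle_trans; [apply Rmult_le_compat_l; [lra | apply Rmult_le_compat_l;
      [apply pow2_ge_0 | apply Rabs_ftm_integrand_le]]|].
    rewrite wderiv_abs_SS. apply Rmult_le_compat_l; [lra | apply Hw].
  - apply (RInt_gen_correct (V := R_CompleteNormedModule)). exists l. exact Hl.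
Qed.

Lemma Rabs_ftm_le (phi : R -> C) (N : nat -> nat -> R) (k m : nat) (xi : R) :
  moment_bound phi N -> Rabs (ftm phi k m xi) <= log_bound N k m.
Proof.
  intros HN. rewrite <- (Rmult_1_l (log_bound N k m)).
  apply (Rabs_RInt_gen_le_log_bound phi N (ftm_integrand phi k m xi));
    [exact HN | lra | | | apply (is_RInt_gen_ftm phi N), HN].
  - intros x. rewrite Rmult_1_l. apply Rabs_ftm_integrand_le.
  - intros a b. apply ex_RInt_ftm_integrand, HN.
Qed.

Lemma ftm_rotate_rotate (phi : R -> C) (N : nat -> nat -> R) (k m : nat) (xi : R) :
  moment_bound phi N -> ftm (rotate (rotate phi)) k m xi = - ftm phi k m xi.
Proof.
  intros HN. apply (is_RInt_gen_unique (V := R_CompleteNormedModule)).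
  apply (is_RInt_gen_eq (fun x => opp (ftm_integrand phi k m xi x))).
  - intros x. unfold ftm_integrand, opp; simpl. rewrite !dim_rotate.
    change (dre (rotate (rotate phi)) m x) with (dim (rotate phi) m x).
    change (dre (rotate phi) m x) with (dim phi m x). rewrite dim_rotate. ring.
  - exact (is_RInt_gen_opp (V := R_NormedModule) _ _ (is_RInt_gen_ftm phi N k m xi HN)).
Qed.

Lemma ftm_integrand_remainder_le (phi : R -> C) (k m : nat) (xi h x : R) :
  Rabs (ftm_integrand phi k m (xi + h) x - ftm_integrand phi k m xi x
        + h * ftm_integrand (rotate phi) (S k) m xi x)
  <= h ^ 2 * wderiv_abs phi (S (S k)) m x.
Proof.
  unfold ftm_integrand. rewrite dim_rotate. change (dre (rotate phi) m x) with (dim phi m x).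
  rewrite <- wderiv_abs_SS. unfold wderiv_abs.
  replace (x * (xi + h)) with (x * xi + x * h) by ring.
  set (cr := cos (x * xi + x * h) - cos (x * xi) + x * h * sin (x * xi)).
  set (sr := sin (x * xi + x * h) - sin (x * xi) - x * h * cos (x * xi)).
  match goal with |- Rabs ?e <= _ =>
    replace e with ((x ^ k * dre phi m x) * cr + (- (x ^ k * dim phi m x)) * sr)
      by (unfold cr, sr; simpl; ring) end.
  pose proof (cos_add_taylor1 (x * xi) (x * h)) as Hc.
  pose proof (sin_add_taylor1 (x * xi) (x * h)) as Hs.
  fold cr in Hc. fold sr in Hs.
  clearbody cr sr. eapply Rle_trans; [apply Rabs_triang|].
  rewrite (Rabs_mult _ cr), (Rabs_mult _ sr), Rabs_Ropp.
  pose proof (Rabs_pos (x ^ k * dre phi m x)). pose proof (Rabs_pos (x ^ k * dim phi m x)).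
  replace (h ^ 2 * (x ^ 2 * _)) with ((x * h) ^ 2 * (Rabs (x ^ k * dre phi m x)
    + Rabs (x ^ k * dim phi m x))) by ring.
  nra.
Qed.

Lemma ftm_remainder_le (phi : R -> C) (N : nat -> nat -> R) (k m : nat) (xi h : R) :
  moment_bound phi N ->
  Rabs (ftm phi k m (xi + h) - ftm phi k m xi + h * ftm (rotate phi) (S k) m xi)
  <= log_bound N (S (S k)) m * h ^ 2.
Proof.
  intros HN. destruct (Req_dec h 0) as [-> | Hh].
  { rewrite Rplus_0_r, Rmult_0_l, Rplus_0_r, Rminus_diag, Rabs_R0. simpl. lra. }
  rewrite (Rmult_comm (log_bound _ _ _)).
  apply (Rabs_RInt_gen_le_log_bound phi N (fun x => ftm_integrand phi k m (xi + h) x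
    - ftm_integrand phi k m xi x + h * ftm_integrand (rotate phi) (S k) m xi x)).
  - exact HN.
  - apply pow2_gt_0, Hh.
  - intros x. apply ftm_integrand_remainder_le.
  - intros a b. destruct HN as [Hs _].
    apply (ex_RInt_plus (V := R_NormedModule)); [apply (ex_RInt_minus (V := R_NormedModule))|
      apply (ex_RInt_scal (V := R_NormedModule))]; apply ex_RInt_ftm_integrand;
      auto using smooth_rotate.
  - apply (is_RInt_gen_eq (fun x => 1 * (1 * ftm_integrand phi k m (xi + h) x
      + -1 * ftm_integrand phi k m xi x) + h * ftm_integrand (rotate phi) (S k) m xi x));
      [intros; ring|].
    replace (ftm phi k m (xi + h) - ftm phi k m xi + h * ftm (rotate phi) (S k) m xi)
      with (1 * (1 * ftm phi k m (xi + h) + -1 * ftm phi k m xi)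
            + h * ftm (rotate phi) (S k) m xi) by ring.
    apply is_RInt_gen_lin; [apply is_RInt_gen_lin|];
      apply (is_RInt_gen_ftm _ N); auto using moment_bound_rotate.
Qed.

Lemma is_derive_ftm (phi : R -> C) (N : nat -> nat -> R) (k m : nat) (xi : R) :
  moment_bound phi N -> is_derive (ftm phi k m) xi (- ftm (rotate phi) (S k) m xi).
Proof.
  intros HN. apply (is_derive_of_sq_remainder _ _ _ (log_bound N (S (S k)) m)). intros h.
  replace (ftm phi k m (xi + h) - ftm phi k m xi - h * - ftm (rotate phi) (S k) m xi)
    with (ftm phi k m (xi + h) - ftm phi k m xi + h * ftm (rotate phi) (S k) m xi) by ring.
  apply ftm_remainder_le, HN.
Qed.

Lemma moment_bound_iter_rotate (phi : R -> C) (N : nat -> nat -> R) (n : nat) :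
  moment_bound phi N -> moment_bound (Nat.iter n rotate phi) N.
Proof. intros HN. induction n as [|n IH]; [exact HN | apply moment_bound_rotate, IH]. Qed.

Lemma Derive_n_ftm (phi : R -> C) (N : nat -> nat -> R) (k m n : nat) (xi : R) :
  moment_bound phi N ->
  Derive_n (ftm phi k m) n xi = (-1) ^ n * ftm (Nat.iter n rotate phi) (k + n) m xi /\
  ex_derive_n (ftm phi k m) n xi.
Proof.
  intros HN. revert xi. induction n as [|n IH]; intros xi.
  { rewrite Nat.add_0_r. simpl. split; [ring | exact I]. }
  pose proof (is_derive_scal (fun y => ftm (Nat.iter n rotate phi) (k + n) m y) xi ((-1) ^ n) _
    (is_derive_ftm _ N (k + n) m xi (moment_bound_iter_rotate phi N n HN))) as HD.
  assert (Hext : forall y, (-1) ^ n * ftm (Nat.iter n rotate phi) (k + n) m y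
                           = Derive_n (ftm phi k m) n y) by (intros y; symmetry; apply IH).
  split.
  - simpl Derive_n. rewrite <- (Derive_ext _ _ xi Hext), (is_derive_unique _ _ _ HD).
    rewrite Nat.add_succ_r. simpl. ring.
  - simpl ex_derive_n. apply (ex_derive_ext _ _ xi Hext). eexists. exact HD.
Qed.

Lemma fourier_int_ftm (phi : R -> C) (N : nat -> nat -> R) (xi : R) : moment_bound phi N ->
  fourier_int phi xi (ftm phi 0 0 xi, ftm (rotate phi) 0 0 xi).
Proof.
  intros HN. unfold fourier_int.
  eapply (is_RInt_gen_ext (V := prod_NormedModule R_AbsRing R_NormedModule R_NormedModule));
    [| apply is_RInt_gen_pair; apply (is_RInt_gen_ftm _ N); auto using moment_bound_rotate].
  apply filter_forall. intros ab x _.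
  unfold ftm_integrand, dre, dim, rotate, Cmult, expi. simpl. f_equal; ring.
Qed.

Lemma is_derive_ftm_integrand (phi : R -> C) (k m : nat) (xi x : R) : smooth phi ->
  is_derive (ftm_integrand phi k m xi) x
    (INR k * ftm_integrand phi (pred k) m xi x + ftm_integrand phi k (S m) xi x
     - xi * ftm_integrand (rotate phi) k m xi x).
Proof.
  intros Hs. unfold ftm_integrand. rewrite dim_rotate.
  change (dre (rotate phi) m x) with (dim phi m x).
  auto_derive; [auto using ex_derive_dre, ex_derive_dim|].
  change (Derive (fun y => dre phi m y) x) with (dre phi (S m) x).
  change (Derive (fun y => dim phi m y) x) with (dim phi (S m) x). ring.
Qed.

Lemma ftm_integration_by_parts (phi : R -> C) (N : nat -> nat -> R) (k m : nat) (xi : R) :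
  moment_bound phi N ->
  INR k * ftm phi (pred k) m xi + ftm phi k (S m) xi = xi * ftm (rotate phi) k m xi.
Proof.
  intros HN. pose proof HN as [Hs [_ [_ Hw]]].
  assert (H0 : is_RInt_gen (fun x => INR k * ftm_integrand phi (pred k) m xi x
      + ftm_integrand phi k (S m) xi x - xi * ftm_integrand (rotate phi) k m xi x)
      minfty pinfty 0).
  { apply (is_RInt_gen_derive_of_decay (ftm_integrand phi k m xi) _ (N (S k) m)).
    - intros x. apply is_derive_ftm_integrand, Hs.
    - intros x. apply (continuous_minus (V := R_NormedModule)).
      + apply (continuous_plus (V := R_NormedModule));
          [apply (continuous_scal_r (V := R_NormedModule)) |];
          apply continuous_ftm_integrand, Hs.
      + apply (continuous_scal_r (V := R_NormedModule)), continuous_ftm_integrand,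
          smooth_rotate, Hs.
    - intros x. eapply Rle_trans;
        [apply Rmult_le_compat_l; [apply Rabs_pos | apply Rabs_ftm_integrand_le]|].
      rewrite wderiv_abs_S. apply Hw. }
  assert (H1 : is_RInt_gen (fun x => INR k * ftm_integrand phi (pred k) m xi x
      + ftm_integrand phi k (S m) xi x - xi * ftm_integrand (rotate phi) k m xi x)
      minfty pinfty (1 * (INR k * ftm phi (pred k) m xi + 1 * ftm phi k (S m) xi)
                     + - xi * ftm (rotate phi) k m xi)).
  { apply (is_RInt_gen_eq (fun x => 1 * (INR k * ftm_integrand phi (pred k) m xi x
      + 1 * ftm_integrand phi k (S m) xi x) + - xi * ftm_integrand (rotate phi) k m xi x));
      [intros; ring|].
    apply is_RInt_gen_lin; [apply is_RInt_gen_lin|]; apply (is_RInt_gen_ftm _ N);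
      auto using moment_bound_rotate. }
  pose proof (is_RInt_gen_unique_R _ _ _ H0 H1). lra.
Qed.

Lemma ftm_mul_xi (phi : R -> C) (N : nat -> nat -> R) (k m : nat) (xi : R) :
  moment_bound phi N ->
  xi * ftm phi k m xi = - (INR k * ftm (rotate phi) (pred k) m xi + ftm (rotate phi) k (S m) xi).
Proof.
  intros HN.
  rewrite (ftm_integration_by_parts (rotate phi) N) by (apply moment_bound_rotate, HN).
  rewrite (ftm_rotate_rotate phi N) by exact HN. ring.
Qed.

(** * Powers of the dual variable *)

Fixpoint falling_fact (k j : nat) : R :=
  match j, k with
  | O, _ => 1
  | S _, O => 0
  | S j', S k' => INR k * falling_fact k' j'
  end.

Lemma falling_fact_0_r (k : nat) : falling_fact k 0 = 1.
Proof. destruct k; reflexivity. Qed.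

Lemma falling_fact_S_r (k j : nat) : falling_fact k (S j) = (INR k - INR j) * falling_fact k j.
Proof.
  revert j. induction k as [|k IH]; intros [|j].
  - simpl. ring.
  - simpl falling_fact. ring.
  - change (falling_fact (S k) 1) with (INR (S k) * falling_fact k 0).
    rewrite !falling_fact_0_r. simpl INR. ring.
  - change (falling_fact (S k) (S (S j))) with (INR (S k) * falling_fact k (S j)).
    change (falling_fact (S k) (S j)) with (INR (S k) * falling_fact k j).
    rewrite IH, !S_INR. ring.
Qed.

Lemma falling_fact_nonneg (k j : nat) : 0 <= falling_fact k j.
Proof.
  revert j. induction k as [|k IH]; intros [|j]; rewrite ?falling_fact_0_r; try (simpl; lra).
  change (falling_fact (S k) (S j)) with (INR (S k) * falling_fact k j).
  apply Rmult_le_pos; [apply pos_INR | apply IH].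
Qed.

Lemma falling_fact_le (k j : nat) : falling_fact k j <= 2 ^ k * INR (fact j).
Proof.
  revert j. induction k as [|k IH]; intros [|j].
  - simpl; lra.
  - simpl falling_fact. rewrite Rmult_1_l. apply pos_INR.
  - rewrite falling_fact_0_r. pose proof (pow_R1_Rle 2 (S k) ltac:(lra)). simpl INR. lra.
  - assert (E : falling_fact (S k) (S j) = falling_fact k (S j) + INR (S j) * falling_fact k j).
    { change (falling_fact (S k) (S j)) with (INR (S k) * falling_fact k j).
      rewrite falling_fact_S_r, !S_INR. ring. }
    pose proof (IH (S j)) as Hk1. pose proof (IH j) as Hk0.
    rewrite E. rewrite fact_simpl, mult_INR in Hk1 |- *. simpl pow.
    assert (INR (S j) * falling_fact k j <= INR (S j) * (2 ^ k * INR (fact j)))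
      by (apply Rmult_le_compat_l; [apply pos_INR | exact Hk0]).
    lra.
Qed.

(* Each application of [ftm_mul_xi] splits one term into two, whence the factor [2^p]. *)
Lemma Rabs_pow_mul_ftm_le (N : nat -> nat -> R) (p : nat) :
  forall (phi : R -> C) (k m : nat) (T xi : R), moment_bound phi N ->
  (forall j, (j <= p)%nat -> falling_fact k j * log_bound N (k - j) (m + p - j) <= T) ->
  Rabs (xi ^ p * ftm phi k m xi) <= 2 ^ p * T.
Proof.
  induction p as [|p IH]; intros phi k m T xi HN HT.
  { specialize (HT 0%nat (Nat.le_refl 0)).
    rewrite falling_fact_0_r, Rmult_1_l, !Nat.sub_0_r, Nat.add_0_r in HT.
    rewrite !pow_O, !Rmult_1_l. eapply Rle_trans; [apply (Rabs_ftm_le _ N), HN | exact HT]. }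
  pose proof (moment_bound_rotate phi N HN) as HrN.
  replace (xi ^ S p * ftm phi k m xi) with (xi ^ p * (xi * ftm phi k m xi)) by (simpl; ring).
  rewrite (ftm_mul_xi phi N) by exact HN.
  replace (xi ^ p * - (INR k * ftm (rotate phi) (pred k) m xi + ftm (rotate phi) k (S m) xi))
    with (- (INR k * (xi ^ p * ftm (rotate phi) (pred k) m xi)
             + xi ^ p * ftm (rotate phi) k (S m) xi)) by ring.
  rewrite Rabs_Ropp. eapply Rle_trans; [apply Rabs_triang|].
  rewrite Rabs_mult, (Rabs_pos_eq (INR k)) by apply pos_INR.
  assert (Hshift : Rabs (xi ^ p * ftm (rotate phi) k (S m) xi) <= 2 ^ p * T).
  { apply IH; [exact HrN|]. intros j Hj.
    replace (S m + p - j)%nat with (m + S p - j)%nat by lia. apply HT. lia. }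
  assert (Hlower : INR k * Rabs (xi ^ p * ftm (rotate phi) (pred k) m xi) <= 2 ^ p * T).
  { destruct k as [|k].
    - rewrite Rmult_0_l. eapply Rle_trans; [apply Rabs_pos | exact Hshift].
    - assert (HSk : 0 < INR (S k)) by apply lt_0_INR, Nat.lt_0_succ.
      replace (2 ^ p * T) with (INR (S k) * (2 ^ p * (T / INR (S k)))) by (field; lra).
      apply Rmult_le_compat_l; [lra|]. apply IH; [exact HrN|]. intros j Hj.
      apply (Rmult_le_reg_l (INR (S k))); [exact HSk|].
      replace (INR (S k) * (T / INR (S k))) with T by (field; lra).
      replace (m + p - j)%nat with (m + S p - S j)%nat by lia.
      rewrite <- Rmult_assoc. apply (HT (S j)). lia. }
  simpl pow. lra.
Qed.

(** * Weight sequences *)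

Lemma weight_sequence_log_convex (M : nat -> R) : weight_sequence M ->
  forall j, M (S j) ^ 2 <= M j * M (S (S j)).
Proof.
  intros [_ [_ [Hlc _]]] j. specialize (Hlc (S j) ltac:(lia)).
  replace (S j - 1)%nat with j in Hlc by lia. exact Hlc.
Qed.

Section Weights.

Variables (M B : nat -> R).
Hypotheses (HM : forall p, 0 < M p) (HB : forall p, 0 < B p)
  (HMlc : forall j, M (S j) ^ 2 <= M j * M (S (S j))).

Lemma Mtilde_eq (k : nat) : Mtilde M k = M (S k) * (2 + ln (M k * M (S (S k)) / M (S k) ^ 2)).
Proof.
  unfold Mtilde, quot. pose proof (HM k). pose proof (HM (S k)). pose proof (HM (S (S k))).
  replace (exp 2 * (M (S (S k)) / M (S k)) / (M (S k) / M k))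
    with (exp 2 * (M k * M (S (S k)) / M (S k) ^ 2)) by (field; lra).
  rewrite ln_mult, ln_exp; [reflexivity | apply exp_pos|].
  apply Rdiv_lt_0_compat; [nra | apply pow_lt; lra].
Qed.

Lemma Mtilde_pos (k : nat) : 0 < Mtilde M k.
Proof.
  rewrite Mtilde_eq. pose proof (HM k). pose proof (HM (S k)). pose proof (HM (S (S k))).
  assert (1 <= M k * M (S (S k)) / M (S k) ^ 2).
  { apply Rle_div_r; [apply pow_lt; lra|]. rewrite Rmult_1_l. apply HMlc. }
  assert (0 <= ln (M k * M (S (S k)) / M (S k) ^ 2)) by (rewrite <- ln_1; apply ln_le; lra).
  apply Rmult_lt_0_compat; lra.
Qed.

(* The factor 2 accounts for the real and imaginary parts. *)
Definition seminorm_moments (C0 h : R) (j m : nat) : R := 2 * C0 * (h ^ (j + m) * M j * B m).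

Lemma moment_bound_of_bounded_by (h C0 : R) (phi : R -> C) : 0 < C0 -> 0 < h ->
  smooth phi -> bounded_by M B h phi C0 -> moment_bound phi (seminorm_moments C0 h).
Proof.
  intros HC Hh Hs Hb. split; [exact Hs|]. unfold seminorm_moments. split; [|split].
  - intros j m. pose proof (HM j). pose proof (HB m). pose proof (pow_lt h (j + m) Hh).
    apply Rmult_lt_0_compat; [lra|]. repeat apply Rmult_lt_0_compat; lra.
  - intros j m. pose proof (HMlc j).
    replace ((2 * C0 * (h ^ (S j + m) * M (S j) * B m)) ^ 2)
      with ((2 * C0 * h ^ (S j + m) * B m) ^ 2 * M (S j) ^ 2) by ring.
    replace (2 * C0 * (h ^ (j + m) * M j * B m)
             * (2 * C0 * (h ^ (S (S j) + m) * M (S (S j)) * B m)))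
      with ((2 * C0 * h ^ (S j + m) * B m) ^ 2 * (M j * M (S (S j))))
      by (simpl Nat.add; simpl pow; ring).
    apply Rmult_le_compat_l; [apply pow2_ge_0 | assumption].
  - intros j m x. specialize (Hb j m x). unfold cderiv, wderiv_abs in *.
    change (Derive_n (fun t => fst (phi t)) m x) with (dre phi m x) in Hb.
    change (Derive_n (fun t => snd (phi t)) m x) with (dim phi m x) in Hb.
    rewrite Cmult_RtoC_pair in Hb.
    pose proof (Rabs_add_le_2Cmod (x ^ j * dre phi m x) (x ^ j * dim phi m x)). lra.
Qed.

Lemma log_bound_seminorm_moments_le (C0 h : R) (k m : nat) : 0 < C0 -> 0 < h ->
  log_bound (seminorm_moments C0 h) k m <= 8 * C0 * (h ^ (k + m + 1) * B m * Mtilde M k).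
Proof.
  intros HC Hh. rewrite Mtilde_eq. unfold log_bound, seminorm_moments.
  pose proof (HM k). pose proof (HM (S k)). pose proof (HM (S (S k))). pose proof (HB m).
  pose proof (pow_lt h (k + m) Hh).
  replace (2 * C0 * (h ^ (k + m) * M k * B m) * (2 * C0 * (h ^ (S (S k) + m) * M (S (S k)) * B m))
           / (2 * C0 * (h ^ (S k + m) * M (S k) * B m)) ^ 2)
    with (M k * M (S (S k)) / M (S k) ^ 2) by (simpl Nat.add; simpl pow; field; repeat split; lra).
  replace (k + m + 1)%nat with (S k + m)%nat by lia.
  assert (0 <= 2 * C0 * (h ^ (S k + m) * M (S k) * B m)).
  { pose proof (pow_lt h (S k + m) Hh). apply Rmult_le_pos; [lra|].
    apply Rmult_le_pos; [apply Rmult_le_pos|]; lra. }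
  replace (8 * C0 * (h ^ (S k + m) * B m * (M (S k) * (2 + ln (M k * M (S (S k)) / M (S k) ^ 2)))))
    with (2 * C0 * (h ^ (S k + m) * M (S k) * B m) * (8 + 4 * ln (M k * M (S (S k)) / M (S k) ^ 2)))
    by ring.
  apply Rmult_le_compat_l; [assumption | lra].
Qed.

End Weights.

Lemma Ahat_pos (A : nat -> R) : (forall p, 0 < A p) -> forall p, 0 < Ahat A p.
Proof. intros HA p. apply Rmult_lt_0_compat; [apply lt_0_INR, lt_O_fact | apply HA]. Qed.

Definition fact_dominated (B : nat -> R) : Prop :=
  exists c D, 0 < c /\ 0 < D /\
    forall p j, (j <= p)%nat -> INR (fact j) * B (p - j)%nat <= c * D ^ p * B p.

Lemma fact_mul_le (a b : nat) : (fact a * fact b <= fact (a + b))%nat.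
Proof.
  induction a as [|a IH]; simpl; [lia|].
  pose proof (lt_O_fact (a + b)). nia.
Qed.

Lemma fact_dominated_Ahat_of_almost_increasing (A : nat -> R) :
  (forall p, 0 < A p) -> almost_increasing A -> fact_dominated (Ahat A).
Proof.
  intros HA [a [Ha Hinc]]. exists a, 1. split; [exact Ha|]. split; [lra|].
  intros p j Hj. unfold Ahat. rewrite pow1.
  pose proof (fact_mul_le j (p - j)) as Hf. replace (j + (p - j))%nat with p in Hf by lia.
  apply le_INR in Hf. rewrite mult_INR in Hf.
  pose proof (Hinc (p - j)%nat p ltac:(lia)). pose proof (HA (p - j)%nat).
  pose proof (pos_INR (fact j)). pose proof (pos_INR (fact (p - j))).
  replace (INR (fact j) * (INR (fact (p - j)) * A (p - j)%nat))
    with (INR (fact j) * INR (fact (p - j)) * A (p - j)%nat) by ring.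
  replace (a * 1 * (INR (fact p) * A p)) with (INR (fact p) * (a * A p)) by ring.
  apply Rmult_le_compat; nra.
Qed.

Lemma scaled_lower_bound_of_eventually (u v : nat -> R) (n0 : nat) (c : R) :
  (forall n, 0 < u n) -> (forall n, 0 < v n) -> 0 < c <= 1 ->
  (forall n, (n0 <= n)%nat -> c * v n <= u n) ->
  exists c', 0 < c' <= 1 /\ forall n, c' * v n <= u n.
Proof.
  intros Hu Hv. revert c. induction n0 as [|n0 IH]; intros c Hc Hev.
  { exists c. split; [exact Hc|]. intros n. apply Hev. lia. }
  apply (IH (Rmin c (u n0 / v n0))).
  - pose proof (Hu n0). pose proof (Hv n0). split.
    + apply Rmin_glb_lt; [lra | apply Rdiv_lt_0_compat; lra].
    + pose proof (Rmin_l c (u n0 / v n0)). lra.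
  - intros n Hn. pose proof (Hv n). destruct (Nat.eq_dec n n0) as [-> | Hne].
    + apply Rle_trans with (u n0 / v n0 * v n0).
      * apply Rmult_le_compat_r; [lra | apply Rmin_r].
      * right. field. lra.
    + apply Rle_trans with (c * v n); [| apply Hev; lia].
      apply Rmult_le_compat_r; [lra | apply Rmin_l].
Qed.

Lemma eventually_root_gt_of_liminf_root_pos (A : nat -> R) : liminf_root_pos A ->
  exists d n0, 0 < d /\ forall n, (n0 <= n)%nat -> d < Rpower (A n) (/ INR n).
Proof.
  unfold liminf_root_pos. set (u := fun p => Rpower (A p) (/ INR p)). intros HL.
  destruct (ex_LimInf_seq u) as [l Hl]. rewrite (is_LimInf_seq_unique u l Hl) in HL.
  destruct l as [l | |]; simpl in HL; [| | contradiction].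
  - assert (Hl2 : 0 < l / 2) by lra.
    destruct (proj2 (Hl (mkposreal _ Hl2))) as [n0 Hn0]. exists (l / 2), n0.
    split; [exact Hl2|]. intros n Hn. specialize (Hn0 n Hn). simpl in Hn0. unfold u in Hn0. lra.
  - destruct (Hl 1) as [n0 Hn0]. exists 1, n0. split; [lra | exact Hn0].
Qed.

Lemma geometric_lower_bound_of_liminf_root_pos (A : nat -> R) :
  (forall p, 0 < A p) -> liminf_root_pos A ->
  exists c d, 0 < c /\ 0 < d <= 1 /\ forall j, c * d ^ j <= A j.
Proof.
  intros HA HL. destruct (eventually_root_gt_of_liminf_root_pos A HL) as [d0 [n0 [Hd0 Hn0]]].
  set (d := Rmin d0 1).
  assert (Hd : 0 < d <= 1) by (split; [apply Rmin_glb_lt; lra | apply Rmin_r]).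
  destruct (scaled_lower_bound_of_eventually A (fun n => d ^ n) (Nat.max n0 1) 1 HA)
    as [c [Hc Hcn]].
  { intros n. apply pow_lt. lra. }
  { lra. }
  { intros n Hn. rewrite Rmult_1_l.
    assert (E : Rpower (A n) (/ INR n) ^ n = A n).
    { rewrite <- Rpower_pow by apply exp_pos. rewrite Rpower_mult, Rinv_l by (apply not_0_INR; lia).
      apply Rpower_1, HA. }
    rewrite <- E. apply pow_incr. split; [lra|].
    pose proof (Rmin_l d0 1) as Hdd0. fold d in Hdd0. specialize (Hn0 n ltac:(lia)). lra. }
  exists c, d. split; [lra | split; [exact Hd | exact Hcn]].
Qed.

Lemma pow_le_pow_of_le1 (d : R) (j p : nat) : 0 <= d <= 1 -> (j <= p)%nat -> d ^ p <= d ^ j.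
Proof.
  intros Hd Hjp. replace p with (j + (p - j))%nat by lia. rewrite pow_add.
  pose proof (pow_le d j (proj1 Hd)). pose proof (pow_le d (p - j) (proj1 Hd)).
  assert (d ^ (p - j) <= 1) by (rewrite <- (pow1 (p - j)); apply pow_incr; lra). nra.
Qed.

Lemma fact_dominated_Ahat_of_alg (A : nat -> R) : (forall p, 0 < A p) ->
  liminf_root_pos A -> alg (Ahat A) -> fact_dominated (Ahat A).
Proof.
  intros HA HL [C1 [HC1 Halg]].
  destruct (geometric_lower_bound_of_liminf_root_pos A HA HL) as [c [d [Hc [Hd Hlow]]]].
  exists (/ c), (C1 / d). split; [apply Rinv_0_lt_compat, Hc|].
  split; [apply Rdiv_lt_0_compat; lra|]. intros p j Hj.
  specialize (Halg (p - j)%nat j). replace (p - j + j)%nat with p in Halg by lia.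
  unfold Ahat in *.
  pose proof (HA j). pose proof (HA (p - j)%nat). pose proof (HA p).
  pose proof (lt_0_INR _ (lt_O_fact j)). pose proof (lt_0_INR _ (lt_O_fact (p - j))).
  pose proof (lt_0_INR _ (lt_O_fact p)).
  assert (Hdp : 0 < d ^ p) by (apply pow_lt; lra).
  assert (HAj : c * d ^ p <= A j).
  { eapply Rle_trans; [|apply Hlow]. apply Rmult_le_compat_l; [lra|].
    apply pow_le_pow_of_le1; [lra | exact Hj]. }
  replace (/ c * (C1 / d) ^ p * (INR (fact p) * A p))
    with (C1 ^ p * (INR (fact p) * A p) / (c * d ^ p))
    by (unfold Rdiv; rewrite Rpow_mult_distr, pow_inv; field; split; lra).
  apply (Rle_div_r _ _ (c * d ^ p)); [nra|]. eapply Rle_trans; [|exact Halg].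
  replace (INR (fact (p - j)) * A (p - j)%nat * (INR (fact j) * A j))
    with (INR (fact j) * (INR (fact (p - j)) * A (p - j)%nat) * A j) by ring.
  apply Rmult_le_compat_l; [|exact HAj]. apply Rmult_le_pos; [lra|]. nra.
Qed.

(** * The Fourier transform and its inverse *)

(* [ft_scaled 1 1 phi] is [F phi] and [ft_scaled (-1) (1/(2 pi)) phi] is [F^-1 phi]. *)
Definition ft_scaled (s c : R) (phi : R -> C) : R -> C :=
  fun xi => (c * ftm phi 0 0 (s * xi), c * ftm (rotate phi) 0 0 (s * xi)).

Lemma Derive_n_ftm_scaled (phi : R -> C) (N : nat -> nat -> R) (s c : R) (q : nat) (x : R) :
  moment_bound phi N ->
  Derive_n (fun xi => c * ftm phi 0 0 (s * xi)) q x
    = c * (s ^ q * ((-1) ^ q * ftm (Nat.iter q rotate phi) q 0 (s * x))) /\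
  ex_derive_n (fun xi => c * ftm phi 0 0 (s * xi)) q x.
Proof.
  intros HN.
  assert (Hloc : locally (s * x) (fun y => forall k, (k <= q)%nat -> ex_derive_n (ftm phi 0 0) k y))
    by (apply filter_forall; intros y k _; apply (Derive_n_ftm phi N), HN).
  split.
  - rewrite Derive_n_scal_l, (Derive_n_comp_scal (ftm phi 0 0)) by exact Hloc.
    rewrite (proj1 (Derive_n_ftm phi N 0 0 q (s * x) HN)). reflexivity.
  - apply ex_derive_n_scal_l, (ex_derive_n_comp_scal (ftm phi 0 0)), Hloc.
Qed.

Lemma smooth_ft_scaled (phi : R -> C) (N : nat -> nat -> R) (s c : R) :
  moment_bound phi N -> smooth (ft_scaled s c phi).
Proof.
  intros HN q x. split.
  - apply (Derive_n_ftm_scaled phi N), HN.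
  - apply (Derive_n_ftm_scaled (rotate phi) N), moment_bound_rotate, HN.
Qed.

Lemma Cmod_ft_scaled_le (phi : R -> C) (N : nat -> nat -> R) (s c T x : R) (p q : nat) :
  moment_bound phi N -> Rabs s = 1 -> Rabs c <= 1 ->
  (forall j, (j <= p)%nat -> falling_fact q j * log_bound N (q - j) (p - j) <= T) ->
  Cmod (Cmult (RtoC (x ^ p)) (cderiv (ft_scaled s c phi) q x)) <= 2 * (2 ^ p * T).
Proof.
  intros HN Hs Hc HT.
  assert (Hpart : forall psi, moment_bound psi N ->
    Rabs (x ^ p * (c * (s ^ q * ((-1) ^ q * ftm (Nat.iter q rotate psi) q 0 (s * x)))))
    <= 2 ^ p * T).
  { intros psi Hpsi.
    replace (x ^ p * (c * (s ^ q * ((-1) ^ q * ftm (Nat.iter q rotate psi) q 0 (s * x)))))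
      with (c * (s ^ q * (-1) ^ q) * (x ^ p * ftm (Nat.iter q rotate psi) q 0 (s * x))) by ring.
    assert (Hcs : Rabs (c * (s ^ q * (-1) ^ q)) <= 1)
      by (rewrite !Rabs_mult, <- !RPow_abs, Hs, Rabs_m1, !pow1; lra).
    assert (Hx : Rabs (x ^ p) = Rabs ((s * x) ^ p))
      by (rewrite <- !RPow_abs, Rabs_mult, Hs, Rmult_1_l; reflexivity).
    rewrite Rabs_mult, (Rabs_mult (x ^ p)), Hx, <- Rabs_mult.
    pose proof (Rabs_pow_mul_ftm_le N p (Nat.iter q rotate psi) q 0 T (s * x)
      (moment_bound_iter_rotate psi N q Hpsi) HT) as Hb.
    pose proof (Rabs_pos (c * (s ^ q * (-1) ^ q))).
    pose proof (Rabs_pos ((s * x) ^ p * ftm (Nat.iter q rotate psi) q 0 (s * x))). nra. }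
  unfold cderiv, ft_scaled. cbn [fst snd].
  rewrite (proj1 (Derive_n_ftm_scaled phi N s c q x HN)),
          (proj1 (Derive_n_ftm_scaled (rotate phi) N s c q x (moment_bound_rotate phi N HN))),
          Cmult_RtoC_pair.
  eapply Rle_trans; [apply Cmod_le_Rabs_add|].
  pose proof (Hpart phi HN). pose proof (Hpart (rotate phi) (moment_bound_rotate phi N HN)). lra.
Qed.

Lemma is_fourier_ft_scaled (phi : R -> C) (N : nat -> nat -> R) :
  moment_bound phi N -> is_fourier phi (ft_scaled 1 1 phi).
Proof.
  intros HN xi. unfold ft_scaled. rewrite !Rmult_1_l. apply (fourier_int_ftm phi N), HN.
Qed.

Lemma is_inv_fourier_ft_scaled (phi : R -> C) (N : nat -> nat -> R) :
  moment_bound phi N -> is_inv_fourier phi (ft_scaled (-1) (/ (2 * PI)) phi).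
Proof.
  intros HN xi. exists (ftm phi 0 0 (- xi), ftm (rotate phi) 0 0 (- xi)). split.
  - apply (fourier_int_ftm phi N), HN.
  - unfold ft_scaled. rewrite Cmult_RtoC_pair. replace (-1 * xi) with (- xi) by ring.
    reflexivity.
Qed.

Lemma Rabs_inv_2PI_le_1 : Rabs (/ (2 * PI)) <= 1.
Proof.
  pose proof PI2_1. rewrite Rabs_pos_eq by (apply Rlt_le, Rinv_0_lt_compat; lra).
  rewrite <- Rinv_1. apply Rinv_le_contravar; lra.
Qed.

Lemma bounded_by_nonneg (N B : nat -> R) (h : R) (phi : R -> C) (K : R) :
  (forall p, 0 < N p) -> (forall p, 0 < B p) -> bounded_by N B h phi K -> 0 <= K.
Proof.
  intros HN HB Hb. specialize (Hb 0%nat 0%nat 0). simpl in Hb.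
  pose proof (Cmod_ge_0 (Cmult (RtoC 1) (cderiv phi 0 0))).
  pose proof (HN 0%nat). pose proof (HB 0%nat).
  assert (0 < 1 * N 0%nat * B 0%nat) by nra. nra.
Qed.

Lemma bounded_by_weaken (N B : nat -> R) (h h' K K' : R) (phi : R -> C) :
  (forall p, 0 < N p) -> (forall p, 0 < B p) -> 0 < h <= h' -> K <= K' ->
  bounded_by N B h phi K -> bounded_by N B h' phi K'.
Proof.
  intros HN HB Hh HK Hb p q x. pose proof (bounded_by_nonneg N B h phi K HN HB Hb).
  eapply Rle_trans; [apply Hb|]. pose proof (HN p). pose proof (HB q).
  pose proof (pow_lt h (p + q) ltac:(lra)). pose proof (pow_incr h h' (p + q) ltac:(lra)).
  apply Rmult_le_compat; [lra | | lra |].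
  - apply Rmult_le_pos; [apply Rmult_le_pos|]; lra.
  - apply Rmult_le_compat_r; [lra|]. apply Rmult_le_compat_r; lra.
Qed.

Lemma bounded_by_of_forall_gt (N B : nat -> R) (h : R) (psi : R -> C) (K C0 : R) :
  (forall p, 0 < N p) -> (forall p, 0 < B p) -> 0 < h -> 0 <= K ->
  (forall e, 0 < e -> bounded_by N B h psi (K * (C0 + e))) -> bounded_by N B h psi (K * C0).
Proof.
  intros HN HB Hh HK He p q x. apply Rle_plus_epsilon. intros eps Heps.
  assert (HX : 0 < h ^ (p + q) * N p * B q)
    by (pose proof (pow_lt h (p + q) Hh); pose proof (HN p); pose proof (HB q);
        repeat apply Rmult_lt_0_compat; lra).
  assert (Hb : forall e, 0 < e -> Cmod (Cmult (RtoC (x ^ p)) (cderiv psi q x))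
                                  <= K * (C0 + e) * (h ^ (p + q) * N p * B q))
    by (intros e He'; apply (He e He')).
  revert Hb HX. generalize (h ^ (p + q) * N p * B q). intros X Hb HX.
  assert (Hd : 0 < eps / (K * X + 1)) by (apply Rdiv_lt_0_compat; nra).
  assert (E : eps / (K * X + 1) * (K * X + 1) = eps) by (field; nra).
  specialize (Hb _ Hd).
  revert Hb Hd E. generalize (eps / (K * X + 1)). intros e Hb Hd E. nra.
Qed.

Section Transform.

Variables (M B : nat -> R) (cB D aM : R).
Hypotheses (HM : forall p, 0 < M p) (HB : forall p, 0 < B p)
  (HMlc : forall j, M (S j) ^ 2 <= M j * M (S (S j))).
Hypotheses (HcB : 0 < cB) (HD : 0 < D)
  (HBfact : forall p j, (j <= p)%nat -> INR (fact j) * B (p - j)%nat <= cB * D ^ p * B p).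
Hypotheses (HaM : 0 < aM) (HMt : forall p q, (p <= q)%nat -> Mtilde M p <= aM * Mtilde M q).

Lemma falling_fact_log_bound_le (C0 h : R) (p q j : nat) : 0 < C0 -> 1 <= h -> (j <= p)%nat ->
  falling_fact q j * log_bound (seminorm_moments M B C0 h) (q - j) (p - j)
  <= 2 ^ q * (cB * D ^ p * B p) * (8 * C0 * h ^ (p + q + 1) * aM * Mtilde M q).
Proof.
  intros HC Hh Hj.
  pose proof (log_bound_seminorm_moments_le M B HM HB C0 h (q - j) (p - j) HC ltac:(lra)) as Hlog.
  assert (Hh' : h ^ (q - j + (p - j) + 1) <= h ^ (p + q + 1)) by (apply Rle_pow; [lra | lia]).
  pose proof (Mtilde_pos M HM HMlc (q - j)). pose proof (HMt (q - j)%nat q ltac:(lia)).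
  pose proof (HB (p - j)%nat). pose proof (pow_lt h (q - j + (p - j) + 1) ltac:(lra)).
  pose proof (falling_fact_nonneg q j). pose proof (falling_fact_le q j) as Hfall.
  pose proof (HBfact p j Hj) as Hfact.
  assert (HL : 8 * C0 * (h ^ (q - j + (p - j) + 1) * B (p - j)%nat * Mtilde M (q - j))
               <= B (p - j)%nat * (8 * C0 * h ^ (p + q + 1) * aM * Mtilde M q)).
  { replace (B (p - j)%nat * (8 * C0 * h ^ (p + q + 1) * aM * Mtilde M q))
      with (8 * C0 * B (p - j)%nat * (h ^ (p + q + 1) * (aM * Mtilde M q))) by ring.
    replace (8 * C0 * (h ^ (q - j + (p - j) + 1) * B (p - j)%nat * Mtilde M (q - j)))
      with (8 * C0 * B (p - j)%nat * (h ^ (q - j + (p - j) + 1) * Mtilde M (q - j))) by ring.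
    apply Rmult_le_compat_l; [nra|]. apply Rmult_le_compat; lra. }
  assert (HL0 : 0 <= 8 * C0 * h ^ (p + q + 1) * aM * Mtilde M q).
  { pose proof (Mtilde_pos M HM HMlc q). pose proof (pow_lt h (p + q + 1) ltac:(lra)).
    apply Rmult_le_pos; [apply Rmult_le_pos; [apply Rmult_le_pos|]|]; lra. }
  revert HL HL0. generalize (8 * C0 * h ^ (p + q + 1) * aM * Mtilde M q). intros L HL HL0.
  apply Rle_trans with (falling_fact q j * (B (p - j)%nat * L)).
  { apply Rmult_le_compat_l; [lra | eapply Rle_trans; [exact Hlog | exact HL]]. }
  apply Rle_trans with (2 ^ q * (INR (fact j) * B (p - j)%nat) * L).
  { rewrite <- Rmult_assoc. apply Rmult_le_compat_r; [lra|]. rewrite <- Rmult_assoc.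
    apply Rmult_le_compat_r; lra. }
  apply Rmult_le_compat_r; [lra|]. apply Rmult_le_compat_l; [apply pow_le; lra | exact Hfact].
Qed.

Lemma pow_two_mul_le (p q : nat) : 2 ^ p * 2 ^ q * D ^ p <= (2 * Rmax D 1) ^ (p + q).
Proof.
  pose proof (Rmax_l D 1). pose proof (Rmax_r D 1).
  rewrite Rpow_mult_distr, !pow_add.
  pose proof (pow_incr D (Rmax D 1) p ltac:(lra)). pose proof (pow_R1_Rle (Rmax D 1) q ltac:(lra)).
  pose proof (pow_lt 2 p ltac:(lra)). pose proof (pow_lt 2 q ltac:(lra)).
  pose proof (pow_lt D p HD).
  apply Rmult_le_compat_l; [nra|]. nra.
Qed.

Lemma bounded_by_ft_scaled_pos (s c C0 h : R) (phi : R -> C) :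
  Rabs s = 1 -> Rabs c <= 1 -> 0 < C0 -> 1 <= h -> smooth phi -> bounded_by M B h phi C0 ->
  bounded_by B (Mtilde M) (2 * Rmax D 1 * h) (ft_scaled s c phi) (16 * cB * aM * h * C0).
Proof.
  intros Hs Hc HC Hh Hsm Hb p q x.
  pose proof (moment_bound_of_bounded_by M B HM HB HMlc h C0 phi HC ltac:(lra) Hsm Hb) as HN.
  eapply Rle_trans.
  { apply (Cmod_ft_scaled_le phi _ s c
      (2 ^ q * (cB * D ^ p * B p) * (8 * C0 * h ^ (p + q + 1) * aM * Mtilde M q)) x p q HN Hs Hc).
    intros j Hj. apply falling_fact_log_bound_le; auto. }
  pose proof (pow_two_mul_le p q). pose proof (HB p). pose proof (Mtilde_pos M HM HMlc q).
  pose proof (pow_lt h (p + q) ltac:(lra)).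
  rewrite Rpow_mult_distr, pow_add with (n := (p + q)%nat), pow_1.
  replace (2 * (2 ^ p * (2 ^ q * (cB * D ^ p * B p)
                          * (8 * C0 * (h ^ (p + q) * h) * aM * Mtilde M q))))
    with ((16 * cB * aM * h * C0 * h ^ (p + q) * B p * Mtilde M q) * (2 ^ p * 2 ^ q * D ^ p))
    by ring.
  replace (16 * cB * aM * h * C0 * ((2 * Rmax D 1) ^ (p + q) * h ^ (p + q) * B p * Mtilde M q))
    with ((16 * cB * aM * h * C0 * h ^ (p + q) * B p * Mtilde M q) * (2 * Rmax D 1) ^ (p + q))
    by ring.
  apply Rmult_le_compat_l; [|assumption].
  do 3 (apply Rmult_le_pos; [|lra]). repeat apply Rmult_le_pos; lra.
Qed.

(* [moment_bound] needs positive moments, hence the detour through [C0 + e]. *)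
Lemma bounded_by_ft_scaled (s c C0 h : R) (phi : R -> C) :
  Rabs s = 1 -> Rabs c <= 1 -> 1 <= h -> smooth phi -> bounded_by M B h phi C0 ->
  bounded_by B (Mtilde M) (2 * Rmax D 1 * h) (ft_scaled s c phi) (16 * cB * aM * h * C0).
Proof.
  intros Hs Hc Hh Hsm Hb. pose proof (bounded_by_nonneg M B h phi C0 HM HB Hb).
  pose proof (Rmax_r D 1).
  apply bounded_by_of_forall_gt; auto using Mtilde_pos; [nra | repeat apply Rmult_le_pos; lra|].
  intros e He. apply bounded_by_ft_scaled_pos; auto; [lra|].
  apply (bounded_by_weaken M B h h C0); auto; lra.
Qed.

Lemma maps_continuously_of_ft_scaled (T : (R -> C) -> (R -> C) -> Prop) (s c : R) :
  Rabs s = 1 -> Rabs c <= 1 -> (forall phi N, moment_bound phi N -> T phi (ft_scaled s c phi)) ->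
  maps_continuously_LB T M B B (Mtilde M) /\ maps_continuously_banach T M B B (Mtilde M).
Proof.
  intros Hs Hc HT. pose proof (Rmax_r D 1) as HD1.
  assert (Hstep : forall h phi, 1 <= h -> in_S M B h phi ->
    T phi (ft_scaled s c phi) /\ in_S B (Mtilde M) (2 * Rmax D 1 * h) (ft_scaled s c phi) /\
    forall C0, bounded_by M B h phi C0 ->
      bounded_by B (Mtilde M) (2 * Rmax D 1 * h) (ft_scaled s c phi) (16 * cB * aM * h * C0)).
  { intros h phi Hh [Hsm [K0 HK0]].
    assert (HN : moment_bound phi (seminorm_moments M B (Rmax K0 1) h)).
    { apply moment_bound_of_bounded_by; auto; [pose proof (Rmax_r K0 1); lra | lra |].
      apply (bounded_by_weaken M B h h K0); auto using Rmax_l; lra. }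
    split; [apply (HT phi _ HN)|]. split; [split; [apply (smooth_ft_scaled phi _ s c HN)|]|].
    - exists (16 * cB * aM * h * K0). apply bounded_by_ft_scaled; auto.
    - intros C0 HC0. apply bounded_by_ft_scaled; auto. }
  assert (Hlift : forall h phi, 0 < h -> in_S M B h phi -> in_S M B (Rmax h 1) phi).
  { intros h phi Hh [Hsm [K0 HK0]]. split; [exact Hsm|]. exists K0.
    apply (bounded_by_weaken M B h (Rmax h 1) K0); auto using Rmax_l; lra. }
  split; [split|].
  - intros phi [h [Hh Hphi]].
    destruct (Hstep (Rmax h 1) phi (Rmax_r h 1) (Hlift h phi Hh Hphi)) as [HT1 [Hin _]].
    exists (ft_scaled s c phi). split; [exact HT1|].
    exists (2 * Rmax D 1 * Rmax h 1). split; [pose proof (Rmax_r h 1); nra | exact Hin].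
  - intros h Hh. pose proof (Rmax_l h 1). pose proof (Rmax_r h 1).
    exists (2 * Rmax D 1 * Rmax h 1), (16 * cB * aM * Rmax h 1).
    split; [nra|]. split; [repeat apply Rmult_le_pos; lra|].
    intros phi Hphi. destruct (Hstep (Rmax h 1) phi (Rmax_r h 1) (Hlift h phi Hh Hphi))
      as [HT1 [Hin Hb]].
    exists (ft_scaled s c phi). split; [exact HT1|]. split; [exact Hin|].
    intros C0 HC0. apply Hb. apply (bounded_by_weaken M B h (Rmax h 1) C0); auto; lra.
  - exists (2 * Rmax D 1). split; [lra|]. intros h Hh. exists (16 * cB * aM * h).
    split; [repeat apply Rmult_le_pos; lra|].
    intros phi Hphi. exists (ft_scaled s c phi). exact (Hstep h phi Hh Hphi).
Qed.

End Transform.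

Theorem proposition4p2 (M A : nat -> R) :
  weight_sequence M ->
  almost_increasing (Mtilde M) ->
  (forall p, 0 < A p) ->
  (almost_increasing A \/ (liminf_root_pos A /\ alg (Ahat A))) ->
  (maps_continuously_LB is_fourier M (Ahat A) (Ahat A) (Mtilde M) /\
   maps_continuously_banach is_fourier M (Ahat A) (Ahat A) (Mtilde M)) /\
  (maps_continuously_LB is_inv_fourier M (Ahat A) (Ahat A) (Mtilde M) /\
   maps_continuously_banach is_inv_fourier M (Ahat A) (Ahat A) (Mtilde M)).
Proof.
  intros HW [aM [HaM HMt]] HA Hcase.
  pose proof (proj1 HW) as HM. pose proof (weight_sequence_log_convex M HW) as HMlc.
  assert (HB : fact_dominated (Ahat A)).
  { destruct Hcase as [Hinc | [Hroot Halg]].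
    - apply fact_dominated_Ahat_of_almost_increasing; auto.
    - apply fact_dominated_Ahat_of_alg; auto. }
  destruct HB as [cB [D [HcB [HD HBfact]]]].
  pose proof (maps_continuously_of_ft_scaled M (Ahat A) cB D aM HM (Ahat_pos A HA) HMlc
    HcB HD HBfact HaM HMt) as Hmaps.
  split.
  - apply (Hmaps is_fourier 1 1);
      [apply Rabs_R1 | rewrite Rabs_R1; lra | apply is_fourier_ft_scaled].
  - apply (Hmaps is_inv_fourier (-1) (/ (2 * PI)));
      [apply Rabs_m1 | apply Rabs_inv_2PI_le_1 | apply is_inv_fourier_ft_scaled].
Qed.
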